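(* Let $r>4$, $\Omega=[-r,r]$, and let $K:\mathbb{R}\to[0,\infty)$ be bounded, even, nonincreasing on $(0,\infty)$, with ${\rm supp}(K)=[-2,2]$ and $\int_{\mathbb{R}}K\ge2$. Let $$B_1=\{u\in L^2(\Omega):\ u(x)=1\text{ for }x>1,\ u(x)=-1\text{ for }x<-1,\ u\text{ odd and nondecreasing}\}.$$ Then the map $u\mapsto f(Tu)$ sends $B_1$ into $B_1$.
   Context: $f$ is the saturation function $f(x)=1$ for $x>1$, $f(x)=x$ for $x\in[-1,1]$, $f(x)=-1$ for $x<-1$. For $u\in L^2(\Omega)$, $Tu(x)=\int_{\mathbb{R}}K(x-y)\widetilde u(y)\,dy$ for $x\in\Omega$, where $\widetilde u$ is the extension of $u$ by $0$ outside $\Omega$. *)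

From Stdlib Require Import Reals Lra.
Open Scope R_scope.

Definition sat (x : R) : R := Rmax (-1) (Rmin 1 x).

Definition RInt_eq (g : R -> R) (a b v : R) : Prop :=
  exists pr : Riemann_integrable g a b, RiemannInt pr = v.

(* u in B_1 (Omega = [-r,r]); u is a pointwise representative on Omega *)
Definition inB1 (r : R) (u : R -> R) : Prop :=
  (forall x, 1 < x <= r -> u x = 1) /\
  (forall x, -r <= x < -1 -> u x = -1) /\
  (forall x, -r <= x <= r -> u (- x) = - u x) /\
  (forall x y, -r <= x -> x <= y -> y <= r -> u x <= u y).

(* Tu(x) = int_R K(x-y) u~(y) dy = int_{-r}^{r} K(x-y) u(y) dy  for x in Omega *)
Definition IsT (K : R -> R) (r : R) (u Tu : R -> R) : Prop :=
  forall x, -r <= x <= r -> RInt_eq (fun y => K (x - y) * u y) (- r) r (Tu x).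

Definition kernel_hyp (K : R -> R) : Prop :=
  (forall x, 0 <= K x) /\
  (exists M, forall x, K x <= M) /\
  (forall x, K (- x) = K x) /\
  (forall x y, 0 < x -> x <= y -> K y <= K x) /\
  (forall x, adherence (fun y => K y <> 0) x <-> -2 <= x <= 2) /\
  (exists v, RInt_eq K (-2) 2 v /\ v >= 2).

(* On each side of y = x the integrand K(x-y) u(y) is
      a monotone nonnegative weight times a monotone function with values in
      [-1,1], hence a sum of two monotone functions, hence integrable.
   2. Mass of the kernel.  Evenness, monotonicity on (0,oo) and int K >= 2 give
      int_m^n K >= 1 for every interval [m,n] containing 0 of length >= 3.
   3. Shape of Tu.  Tu is odd (substitution y -> -y); Tu >= 1 on (1,r] (the
      part of u on [1,r] equals 1 and sees mass >= 1 of K, the part on [-1,1]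
      contributes >= 0 by oddness of u and monotonicity of K, the rest is cut
      off by the support of K); and Tu is nondecreasing on [-(r-3), r-3]
      because there Tu(x) = int_{-3}^{3} K(t) u(x-t) dt.
   Saturating an odd function that is >= 1 on (1,r] and nondecreasing on
   [-1,1] yields an element of B_1, which concludes. *)

From Stdlib Require Import Reals Lra Lia ClassicalEpsilon RList.
From Coquelicot Require Import Coquelicot.
Open Scope R_scope.

Lemma adapted_couple_ext (f g : R -> R) a b l lf :
  adapted_couple f a b l lf ->
  (forall x, Rmin a b < x < Rmax a b -> f x = g x) -> adapted_couple g a b l lf.
Proof.
  intros (Hsorted & Hfirst & Hlast & Hlen & Hconst) Hfg.
  repeat split; auto.
  intros i Hi x Hx.
  assert (Hmono := proj1 (RList_P6 l) Hsorted).
  unfold open_interval in Hx.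
  assert (Hlo : pos_Rl l 0 <= pos_Rl l i) by (apply Hmono; lia).
  assert (Hhi : pos_Rl l (S i) <= pos_Rl l (pred (length l))) by (apply Hmono; lia).
  rewrite <- Hfg.
  - apply Hconst; auto.
  - rewrite <- Hfirst, <- Hlast; lra.
Qed.

Definition StepFun_ext {a b} (f : StepFun a b) (g : R -> R)
  (Hfg : forall x, Rmin a b < x < Rmax a b -> f x = g x) : IsStepFun g a b :=
  match pre f as p
    return (adapted_couple f a b (projT1 p) (projT1 (projT2 p)) -> IsStepFun g a b) with
  | existT l (existT lf p) =>
      fun q => existT _ l (existT _ lf (adapted_couple_ext _ _ _ _ _ _ q Hfg))
  end (projT2 (projT2 (pre f))).

Lemma StepFun_ext_RiemannInt {a b} (f : StepFun a b) g Hfg :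
  RiemannInt_SF (mkStepFun (StepFun_ext f g Hfg)) = RiemannInt_SF f.
Proof. destruct f as [fe [l [lf p]]]. reflexivity. Qed.

Definition step_approx (h : R -> R) (a b e : R) : Prop :=
  exists (phi psi : StepFun a b),
    (forall t, a <= t <= b -> Rabs (h t - phi t) <= psi t) /\
    Rabs (RiemannInt_SF psi) <= e.

Definition glue (c : R) (f1 f2 : R -> R) (t : R) : R :=
  if Rle_dec t c then f1 t else f2 t.

Definition glue_StepFun_left {a c e} (f1 : StepFun a c) (f2 : StepFun c e)
  (Hac : a <= c) : IsStepFun (glue c f1 f2) a c.
Proof.
  apply (StepFun_ext f1). intros x Hx.
  rewrite Rmin_left, Rmax_right in Hx by lra.
  unfold glue. destruct (Rle_dec x c); [reflexivity | lra].
Defined.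

Definition glue_StepFun_right {a c e} (f1 : StepFun a c) (f2 : StepFun c e)
  (Hce : c <= e) : IsStepFun (glue c f1 f2) c e.
Proof.
  apply (StepFun_ext f2). intros x Hx.
  rewrite Rmin_left, Rmax_right in Hx by lra.
  unfold glue. destruct (Rle_dec x c); [lra | reflexivity].
Defined.

Lemma step_approx_glue h a c e e1 e2 :
  a <= c -> c <= e -> step_approx h a c e1 -> step_approx h c e e2 ->
  step_approx h a e (e1 + e2).
Proof.
  intros Hac Hce [phi1 [psi1 [Hb1 Hi1]]] [phi2 [psi2 [Hb2 Hi2]]].
  set (Phi1 := glue_StepFun_left phi1 phi2 Hac).
  set (Phi2 := glue_StepFun_right phi1 phi2 Hce).
  set (Psi1 := glue_StepFun_left psi1 psi2 Hac).
  set (Psi2 := glue_StepFun_right psi1 psi2 Hce).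
  exists (mkStepFun (StepFun_P46 Phi1 Phi2)), (mkStepFun (StepFun_P46 Psi1 Psi2)).
  split.
  - intros t Ht. simpl. unfold glue. destruct (Rle_dec t c).
    + apply Hb1; lra.
    + apply Hb2; lra.
  - rewrite <- (StepFun_P43 Psi1 Psi2).
    assert (E1 : RiemannInt_SF (mkStepFun Psi1) = RiemannInt_SF psi1)
      by apply StepFun_ext_RiemannInt.
    assert (E2 : RiemannInt_SF (mkStepFun Psi2) = RiemannInt_SF psi2)
      by apply StepFun_ext_RiemannInt.
    rewrite E1, E2.
    eapply Rle_trans; [apply Rabs_triang | lra].
Qed.

Lemma step_approx_piece h c d :
  c <= d -> (forall s t, c <= s -> s <= t -> t <= d -> h s <= h t) ->
  step_approx h c d ((d - c) * (h d - h c)).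
Proof.
  intros Hcd Hh.
  exists (mkStepFun (StepFun_P4 c d (h c))), (mkStepFun (StepFun_P4 c d (h d - h c))).
  split.
  - intros t Ht. simpl. unfold fct_cte.
    assert (h c <= h t) by (apply Hh; lra).
    assert (h t <= h d) by (apply Hh; lra).
    rewrite Rabs_right; lra.
  - rewrite StepFun_P18, Rmult_comm, Rabs_right; [lra|].
    apply Rle_ge, Rmult_le_pos; [lra|]. assert (h c <= h d) by (apply Hh; lra). lra.
Qed.

(* Uniform subdivision with n steps of width d: the errors telescope. *)
Lemma step_approx_uniform h a b d :
  0 <= d -> (forall s t, a <= s -> s <= t -> t <= b -> h s <= h t) ->
  forall n : nat, a + INR n * d <= b ->
  step_approx h a (a + INR n * d) (d * (h (a + INR n * d) - h a)).
Proof.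
  intros Hd Hh. induction n as [|n IH]; intros Hn.
  - simpl. replace (a + 0 * d) with a by ring.
    replace (d * (h a - h a)) with ((a - a) * (h a - h a)) by ring.
    apply step_approx_piece; [lra|]. intros s t Hs Hst Ht. replace s with t by lra. lra.
  - rewrite S_INR in *.
    assert (Hnd : 0 <= INR n * d) by (apply Rmult_le_pos; [apply pos_INR | lra]).
    set (c := a + INR n * d) in *.
    replace (a + (INR n + 1) * d) with (c + d) in * by (unfold c; ring).
    replace (d * (h (c + d) - h a)) with
      (d * (h c - h a) + ((c + d) - c) * (h (c + d) - h c)) by ring.
    apply (step_approx_glue _ _ c); try (unfold c; lra).
    + apply IH; lra.
    + apply step_approx_piece; [lra|]. intros s t Hs Hst Ht. apply Hh; unfold c in *; lra.
Qed.

Lemma nondecreasing_Riemann_integrable h a b :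
  a <= b -> (forall s t, a <= s -> s <= t -> t <= b -> h s <= h t) ->
  Riemann_integrable h a b.
Proof.
  intros Hab Hh eps.
  assert (Hvar : 0 <= h b - h a) by (assert (h a <= h b) by (apply Hh; lra); lra).
  destruct (constructive_indefinite_description _
              (INR_archimed eps ((b - a) * (h b - h a)) (cond_pos eps))) as [n Hn].
  assert (HN : 0 < INR (S n)) by (apply lt_0_INR; lia).
  assert (HNeps : INR (S n) * eps > (b - a) * (h b - h a))
    by (rewrite S_INR; pose proof (cond_pos eps); lra).
  set (d := (b - a) / INR (S n)).
  assert (Hd : 0 <= d) by (unfold d; apply Rdiv_le_0_compat; lra).
  assert (Hend : a + INR (S n) * d = b) by (unfold d; field; lra).
  assert (Happrox := step_approx_uniform h a b d Hd Hh (S n) (Req_le _ _ Hend)).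
  rewrite Hend in Happrox.
  assert (Hsmall : d * (h b - h a) < eps).
  { unfold d. apply (Rmult_lt_reg_l (INR (S n))); auto.
    replace (INR (S n) * ((b - a) / INR (S n) * (h b - h a)))
      with ((b - a) * (h b - h a)) by (field; lra).
    lra. }
  apply constructive_indefinite_description in Happrox. destruct Happrox as [phi Happrox].
  apply constructive_indefinite_description in Happrox. destruct Happrox as [psi [Hb Hi]].
  exists phi, psi. rewrite Rmin_left, Rmax_right by lra. split; [auto | lra].
Qed.

(* Coquelicot's integration lemmas are stated for an abstract normed module,
   whose operations do not unify syntactically with those of R; these are
   their specializations to real-valued functions. *)
Lemma RInt_oppR (f : R -> R) a b :
  ex_RInt f a b -> RInt (fun y => - f y) a b = - RInt f a b.
Proof. intro H. exact (RInt_opp f a b H). Qed.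

Lemma ex_RInt_oppR (f : R -> R) a b : ex_RInt f a b -> ex_RInt (fun y => - f y) a b.
Proof. intro H. exact (ex_RInt_opp f a b H). Qed.

Lemma RInt_plusR (f g : R -> R) a b : ex_RInt f a b -> ex_RInt g a b ->
  RInt (fun y => f y + g y) a b = RInt f a b + RInt g a b.
Proof. intros Hf Hg. exact (RInt_plus f g a b Hf Hg). Qed.

Lemma ex_RInt_plusR (f g : R -> R) a b : ex_RInt f a b -> ex_RInt g a b ->
  ex_RInt (fun y => f y + g y) a b.
Proof. intros Hf Hg. exact (ex_RInt_plus f g a b Hf Hg). Qed.

Lemma ex_RInt_minusR (f g : R -> R) a b : ex_RInt f a b -> ex_RInt g a b ->
  ex_RInt (fun y => f y - g y) a b.
Proof. intros Hf Hg. exact (ex_RInt_minus f g a b Hf Hg). Qed.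

Lemma ex_RInt_extR (f g : R -> R) a b :
  (forall x, Rmin a b < x < Rmax a b -> f x = g x) -> ex_RInt f a b -> ex_RInt g a b.
Proof. intros Hfg H. exact (ex_RInt_ext f g a b Hfg H). Qed.

Lemma RInt_extR (f g : R -> R) a b :
  (forall x, Rmin a b < x < Rmax a b -> f x = g x) -> RInt f a b = RInt g a b.
Proof. intro Hfg. exact (RInt_ext f g a b Hfg). Qed.

Lemma RInt_ChaslesR (f : R -> R) a b c : ex_RInt f a b -> ex_RInt f b c ->
  RInt f a c = RInt f a b + RInt f b c.
Proof. intros H1 H2. rewrite <- (RInt_Chasles f a b c H1 H2). reflexivity. Qed.

Lemma RInt_swapR (f : R -> R) a b : ex_RInt f a b -> RInt f b a = - RInt f a b.
Proof. intro H. rewrite <- (opp_RInt_swap f a b H). reflexivity. Qed.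

Lemma ex_RInt_sub (f : R -> R) a b c d :
  a <= c -> c <= d -> d <= b -> ex_RInt f a b -> ex_RInt f c d.
Proof.
  intros Hac Hcd Hdb H.
  apply (ex_RInt_Chasles_2 f a c d); [lra|].
  apply (ex_RInt_Chasles_1 f a d b); [lra | exact H].
Qed.

Lemma RInt_zero_on (f : R -> R) a b :
  a <= b -> (forall t, a < t < b -> f t = 0) -> RInt f a b = 0.
Proof.
  intros Hab Hf. rewrite (RInt_ext f (fun _ => 0)).
  - rewrite RInt_const. apply Rmult_0_r.
  - intros t Ht. rewrite Rmin_left, Rmax_right in Ht by lra. auto.
Qed.

Lemma RInt_reflect (f : R -> R) v a b : ex_RInt f a b ->
  ex_RInt (fun y => f (v - y)) (v - b) (v - a) /\
  RInt f a b = RInt (fun y => f (v - y)) (v - b) (v - a).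
Proof.
  intro H.
  assert (H' : ex_RInt f (-1 * (v - a) + v) (-1 * (v - b) + v)).
  { replace (-1 * (v - a) + v) with a by ring.
    replace (-1 * (v - b) + v) with b by ring. exact H. }
  assert (Hex := ex_RInt_comp_lin f (-1) v (v - a) (v - b) H').
  assert (Hint := RInt_comp_lin f (-1) v (v - a) (v - b) H').
  replace (-1 * (v - a) + v) with a in Hint by ring.
  replace (-1 * (v - b) + v) with b in Hint by ring.
  assert (Hpt : forall y, - (-1 * f (-1 * y + v)) = f (v - y)).
  { intro y. replace (-1 * y + v) with (v - y) by ring. ring. }
  assert (Hex' : ex_RInt (fun y => f (v - y)) (v - a) (v - b)).
  { apply ex_RInt_extR with (fun y => - (-1 * f (-1 * y + v))); [intros; apply Hpt|].
    exact (ex_RInt_oppR _ _ _ Hex). }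
  assert (Hneg : RInt (fun y => f (v - y)) (v - a) (v - b) = - RInt f a b).
  { rewrite <- Hint. etransitivity; [|exact (RInt_oppR _ _ _ Hex)].
    apply RInt_ext. intros y _. rewrite <- Hpt. reflexivity. }
  split.
  - apply ex_RInt_swap; auto.
  - rewrite (RInt_swapR _ _ _ Hex'), Hneg. symmetry; apply Ropp_involutive.
Qed.

Lemma RInt_shift (f : R -> R) c a b : ex_RInt f a b ->
  ex_RInt (fun y => f (y + c)) (a - c) (b - c) /\
  RInt f a b = RInt (fun y => f (y + c)) (a - c) (b - c).
Proof.
  intro H.
  assert (H' : ex_RInt f (1 * (a - c) + c) (1 * (b - c) + c)).
  { replace (1 * (a - c) + c) with a by ring.
    replace (1 * (b - c) + c) with b by ring. exact H. }
  assert (Hex := ex_RInt_comp_lin f 1 c (a - c) (b - c) H').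
  assert (Hint := RInt_comp_lin f 1 c (a - c) (b - c) H').
  replace (1 * (a - c) + c) with a in Hint by ring.
  replace (1 * (b - c) + c) with b in Hint by ring.
  assert (Hpt : forall y, 1 * f (1 * y + c) = f (y + c)).
  { intro y. replace (1 * y + c) with (y + c) by ring. ring. }
  split.
  - apply ex_RInt_extR with (2 := Hex). intros; apply Hpt.
  - rewrite <- Hint. apply RInt_ext. intros; apply Hpt.
Qed.

Lemma ex_RInt_nondecreasing (h : R -> R) a b :
  a <= b -> (forall s t, a <= s -> s <= t -> t <= b -> h s <= h t) -> ex_RInt h a b.
Proof.
  intros Hab Hh. apply ex_RInt_Reals_1, nondecreasing_Riemann_integrable; auto.
Qed.

Lemma ex_RInt_nonincreasing (h : R -> R) a b :
  a <= b -> (forall s t, a <= s -> s <= t -> t <= b -> h t <= h s) -> ex_RInt h a b.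
Proof.
  intros Hab Hh.
  apply ex_RInt_extR with (fun t => - - h t); [intros; apply Ropp_involutive|].
  apply ex_RInt_oppR, ex_RInt_nondecreasing; auto.
  intros s t Hs Hst Ht. apply Ropp_le_contravar, Hh; auto.
Qed.

(* A nonnegative nondecreasing weight w times a nondecreasing v with values in
   [-1,1] is integrable: w v = w (v + 1) - w, a difference of monotone maps. *)
Lemma ex_RInt_weight_nondecreasing (w v : R -> R) a b :
  a <= b ->
  (forall s t, a <= s -> s <= t -> t <= b -> 0 <= w s <= w t) ->
  (forall s t, a <= s -> s <= t -> t <= b -> v s <= v t) ->
  (forall t, a <= t <= b -> -1 <= v t <= 1) ->
  ex_RInt (fun t => w t * v t) a b.
Proof.
  intros Hab Hw Hv Hbd.
  apply ex_RInt_extR with (fun t => w t * (v t + 1) - w t); [intros; ring|].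
  apply ex_RInt_minusR; apply ex_RInt_nondecreasing; auto;
    intros s t Hs Hst Ht; specialize (Hw s t Hs Hst Ht); [|lra].
  assert (v s <= v t) by auto. assert (-1 <= v s) by (apply Hbd; lra). nra.
Qed.

(* Same with a nonincreasing weight: w v = w (v - 1) + w. *)
Lemma ex_RInt_weight_nonincreasing (w v : R -> R) a b :
  a <= b ->
  (forall s t, a <= s -> s <= t -> t <= b -> 0 <= w t <= w s) ->
  (forall s t, a <= s -> s <= t -> t <= b -> v s <= v t) ->
  (forall t, a <= t <= b -> -1 <= v t <= 1) ->
  ex_RInt (fun t => w t * v t) a b.
Proof.
  intros Hab Hw Hv Hbd.
  apply ex_RInt_extR with (fun t => w t * (v t - 1) + w t); [intros; ring|].
  apply ex_RInt_plusR.
  - apply ex_RInt_nondecreasing; auto. intros s t Hs Hst Ht.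
    specialize (Hw s t Hs Hst Ht).
    assert (v s <= v t) by auto. assert (v t <= 1) by (apply Hbd; lra). nra.
  - apply ex_RInt_nonincreasing; auto. intros s t Hs Hst Ht. apply Hw; auto.
Qed.

Section Convolution.

Variable K : R -> R.
Hypothesis K_nonneg : forall t, 0 <= K t.
Hypothesis K_even : forall t, K (- t) = K t.
Hypothesis K_nonincr : forall s t, 0 < s -> s <= t -> K t <= K s.
Hypothesis K_support : forall t, 2 < Rabs t -> K t = 0.
Hypothesis K_int : ex_RInt K (-2) 2.
Hypothesis K_mass : 2 <= RInt K (-2) 2.

Lemma K_ex_RInt a b : ex_RInt K a b.
Proof.
  assert (Hwide : forall m n, m <= -2 -> 2 <= n -> ex_RInt K m n).
  { intros m n Hm Hn. apply ex_RInt_Chasles with (-2); [|apply ex_RInt_Chasles with 2; auto];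
      apply ex_RInt_extR with (fun _ => 0); try apply ex_RInt_const;
      intros x Hx; rewrite Rmin_left, Rmax_right in Hx by lra;
      symmetry; apply K_support; [rewrite Rabs_left | rewrite Rabs_right]; lra. }
  assert (Hle : forall a b, a <= b -> ex_RInt K a b).
  { intros c d Hcd. set (L := Rabs c + Rabs d + 2).
    pose proof (Rle_abs c). pose proof (Rle_abs d).
    pose proof (Rle_abs (- c)). pose proof (Rle_abs (- d)). rewrite !Rabs_Ropp in *.
    apply (ex_RInt_sub K (- L) L); try (unfold L; lra). apply Hwide; unfold L; lra. }
  destruct (Rle_dec a b); [apply Hle; auto | apply ex_RInt_swap, Hle; lra].
Qed.

Lemma K_RInt_incl m a b n :
  m <= a -> a <= b -> b <= n -> RInt K a b <= RInt K m n.
Proof.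
  intros Hma Hab Hbn.
  rewrite (RInt_ChaslesR K m a n), (RInt_ChaslesR K a b n); try apply K_ex_RInt.
  assert (0 <= RInt K m a) by (apply RInt_ge_0; auto using K_ex_RInt).
  assert (0 <= RInt K b n) by (apply RInt_ge_0; auto using K_ex_RInt).
  lra.
Qed.

(* By evenness, each half of [-2,2] carries mass at least 1. *)
Lemma K_half_mass : 1 <= RInt K (-2) 0 /\ 1 <= RInt K 0 2.
Proof.
  rewrite (RInt_ChaslesR K (-2) 0 2) in K_mass by apply K_ex_RInt.
  destruct (RInt_reflect K 0 (-2) 0 (K_ex_RInt _ _)) as [_ Hrefl].
  replace (0 - 0) with 0 in Hrefl by ring. replace (0 - -2) with 2 in Hrefl by ring.
  rewrite (RInt_ext (fun y => K (0 - y)) K 0 2) in Hrefl.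
  - lra.
  - intros; replace (0 - x) with (- x) by ring; apply K_even.
Qed.

(* By monotonicity, the mass of [1,2] is at most that of [0,1] (and
   symmetrically), so [-1,1] carries at least half the total mass. *)
Lemma K_center_mass : 1 <= RInt K (-1) 1.
Proof.
  assert (Htot := K_mass).
  rewrite (RInt_ChaslesR K (-2) (-1) 2), (RInt_ChaslesR K (-1) 1 2) in Htot
    by apply K_ex_RInt.
  assert (Hright : RInt K 1 2 <= RInt K 0 1).
  { destruct (RInt_shift K 1 1 2 (K_ex_RInt _ _)) as [Hex Hsh].
    replace (1 - 1) with 0 in Hex, Hsh by ring. replace (2 - 1) with 1 in Hex, Hsh by ring.
    rewrite Hsh. apply RInt_le; auto using K_ex_RInt; [lra|].
    intros x Hx. apply K_nonincr; lra. }
  assert (Hleft : RInt K (-2) (-1) <= RInt K (-1) 0).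
  { destruct (RInt_shift K (-1) (-2) (-1) (K_ex_RInt _ _)) as [Hex Hsh].
    replace (-2 - -1) with (-1) in Hex, Hsh by ring. replace (-1 - -1) with 0 in Hex, Hsh by ring.
    rewrite Hsh. apply RInt_le; auto using K_ex_RInt; [lra|].
    intros x Hx. rewrite <- (K_even (x + -1)), <- (K_even x). apply K_nonincr; lra. }
  rewrite (RInt_ChaslesR K (-1) 0 1) in * by apply K_ex_RInt.
  lra.
Qed.

Lemma K_window_mass m n : m <= 0 -> 0 <= n -> 3 <= n - m -> 1 <= RInt K m n.
Proof.
  intros Hm Hn Hmn.
  destruct K_half_mass as [Hneg Hpos].
  destruct (Rle_dec m (-2)); [|destruct (Rle_dec 2 n)].
  - eapply Rle_trans; [apply Hneg | apply K_RInt_incl; lra].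
  - eapply Rle_trans; [apply Hpos | apply K_RInt_incl; lra].
  - eapply Rle_trans; [apply K_center_mass | apply K_RInt_incl; lra].
Qed.

Variables (M r : R) (u : R -> R).
Hypothesis K_le_M : forall t, K t <= M.
Hypothesis r_gt_4 : r > 4.
Hypothesis u_B1 : inB1 r u.

Lemma u_bounded y : -r <= y <= r -> -1 <= u y <= 1.
Proof.
  destruct u_B1 as (u_hi & u_lo & _ & u_mono). intro Hy. split.
  - rewrite <- (u_lo (- r)) by lra. apply u_mono; lra.
  - rewrite <- (u_hi r) by lra. apply u_mono; lra.
Qed.

Definition conv_integrand (x y : R) : R := K (x - y) * u y.

Definition conv (x : R) : R := RInt (conv_integrand x) (- r) r.

(* On either side of y = x, the integrand is a monotone nonnegative weight
   times u.  The weight K(|x - y|) is only monotone for y <> x, so the value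
   at the point t = 0 is raised to the bound M. *)
Lemma conv_integrand_integrable x : -r <= x <= r -> ex_RInt (conv_integrand x) (- r) r.
Proof.
  intro Hx. destruct u_B1 as (_ & _ & _ & u_mono).
  set (Kc := fun t => if Rle_dec t 0 then M else K t).
  assert (Kc_nonneg : forall t, 0 <= Kc t).
  { intro t. unfold Kc. destruct (Rle_dec t 0); auto.
    apply Rle_trans with (K 0); auto. }
  assert (Kc_nonincr : forall s t, 0 <= s -> s <= t -> Kc t <= Kc s).
  { intros s t Hs Hst. unfold Kc.
    destruct (Rle_dec t 0), (Rle_dec s 0); try lra; auto. apply K_nonincr; lra. }
  apply ex_RInt_Chasles with x.
  - apply ex_RInt_extR with (fun y => Kc (x - y) * u y).
    + intros y Hy. rewrite Rmin_left, Rmax_right in Hy by lra.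
      unfold Kc, conv_integrand. destruct (Rle_dec (x - y) 0); [lra | reflexivity].
    + apply ex_RInt_weight_nondecreasing; try lra.
      * intros s t Hs Hst Ht. split; auto. apply Kc_nonincr; lra.
      * intros; apply u_mono; lra.
      * intros; apply u_bounded; lra.
  - apply ex_RInt_extR with (fun y => Kc (y - x) * u y).
    + intros y Hy. rewrite Rmin_left, Rmax_right in Hy by lra.
      unfold Kc, conv_integrand. destruct (Rle_dec (y - x) 0); [lra|].
      replace (x - y) with (- (y - x)) by ring. rewrite K_even. reflexivity.
    + apply ex_RInt_weight_nonincreasing; try lra.
      * intros s t Hs Hst Ht. split; auto. apply Kc_nonincr; lra.
      * intros; apply u_mono; lra.
      * intros; apply u_bounded; lra.
Qed.

(* Tu is odd: substitute y -> -y and use that K is even and u odd. *)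
Lemma conv_odd x : -r <= x <= r -> conv (- x) = - conv x.
Proof.
  intro Hx. destruct u_B1 as (_ & _ & u_odd & _).
  unfold conv.
  destruct (RInt_reflect _ 0 (- r) r (conv_integrand_integrable x Hx)) as [_ Hrefl].
  replace (0 - r) with (- r) in Hrefl by ring. replace (0 - - r) with r in Hrefl by ring.
  rewrite Hrefl, (RInt_extR (fun y => conv_integrand x (0 - y)) (fun y => - conv_integrand (- x) y)).
  - rewrite RInt_oppR by (apply conv_integrand_integrable; lra). symmetry; apply Ropp_involutive.
  - intros y Hy. rewrite Rmin_left, Rmax_right in Hy by lra.
    unfold conv_integrand. replace (0 - y) with (- y) by ring. rewrite u_odd by lra.
    replace (x - - y) with (- (- x - y)) by ring. rewrite K_even. ring.
Qed.

Lemma conv_window x : -(r - 3) <= x <= r - 3 ->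
  ex_RInt (fun t => K t * u (x - t)) (-3) 3 /\
  conv x = RInt (fun t => K t * u (x - t)) (-3) 3.
Proof.
  intro Hx. set (F := fun t => K t * u (x - t)).
  destruct (RInt_reflect _ x (- r) r (conv_integrand_integrable x ltac:(lra)))
    as [Hex Hrefl].
  replace (x - - r) with (x + r) in Hex, Hrefl by ring.
  assert (HF : forall t, conv_integrand x (x - t) = F t).
  { intro t. unfold conv_integrand, F. replace (x - (x - t)) with t by ring. reflexivity. }
  assert (HexF : ex_RInt F (x - r) (x + r)) by (apply ex_RInt_extR with (2 := Hex); auto).
  assert (Hex3 : ex_RInt F (-3) 3) by (apply (ex_RInt_sub F (x - r) (x + r)); auto; lra).
  split; [exact Hex3|].
  unfold conv. rewrite Hrefl, (RInt_ext _ F) by auto.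
  rewrite (RInt_ChaslesR F (x - r) (-3) (x + r)), (RInt_ChaslesR F (-3) 3 (x + r))
    by (apply (ex_RInt_sub F (x - r) (x + r)); auto; lra).
  rewrite (RInt_zero_on F (x - r) (-3)), (RInt_zero_on F 3 (x + r)).
  - ring.
  - lra.
  - intros t Ht. unfold F. rewrite K_support; [ring | rewrite Rabs_right; lra].
  - lra.
  - intros t Ht. unfold F. rewrite K_support; [ring | rewrite Rabs_left; lra].
Qed.

(* Hence Tu is nondecreasing there, u being nondecreasing and K >= 0. *)
Lemma conv_nondecreasing x z :
  -(r - 3) <= x -> x <= z -> z <= r - 3 -> conv x <= conv z.
Proof.
  intros Hx Hxz Hz. destruct u_B1 as (_ & _ & _ & u_mono).
  destruct (conv_window x ltac:(lra)) as [Hexx ->].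
  destruct (conv_window z ltac:(lra)) as [Hexz ->].
  apply RInt_le; auto; [lra|].
  intros t Ht. apply Rmult_le_compat_l; auto. apply u_mono; lra.
Qed.

(* For x in (1,r]: the part of u on [1,r] equals 1 and sees K on the window
   [x-r, x-1] of mass >= 1; the part on [-1,1] contributes
   int_0^1 (K(x-y) - K(x+y)) u(y) dy >= 0; the rest is outside supp K. *)
Lemma conv_ge_1 x : 1 < x <= r -> 1 <= conv x.
Proof.
  intro Hx. destruct u_B1 as (u_hi & _ & u_odd & u_mono).
  set (G := conv_integrand x).
  assert (HG : ex_RInt G (- r) r) by (apply conv_integrand_integrable; lra).
  assert (Hsub : forall c d, -r <= c -> c <= d -> d <= r -> ex_RInt G c d)
    by (intros; apply (ex_RInt_sub G (- r) r); auto).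
  unfold conv. fold G.
  rewrite (RInt_ChaslesR G (- r) (-1) r), (RInt_ChaslesR G (-1) 1 r),
    (RInt_ChaslesR G (-1) 0 1) by (apply Hsub; lra).
  rewrite (RInt_zero_on G (- r) (-1)); [|lra|].
  2:{ intros t Ht. unfold G, conv_integrand.
      rewrite K_support; [ring | rewrite Rabs_right; lra]. }
  assert (Hfar : 1 <= RInt G 1 r).
  { rewrite (RInt_extR G (fun y => K (x - y))).
    2:{ intros t Ht. rewrite Rmin_left, Rmax_right in Ht by lra.
        unfold G, conv_integrand. rewrite u_hi by lra. ring. }
    destruct (RInt_reflect K x (x - r) (x - 1) (K_ex_RInt _ _)) as [_ Hrefl].
    replace (x - (x - 1)) with 1 in Hrefl by ring.
    replace (x - (x - r)) with r in Hrefl by ring.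
    rewrite <- Hrefl. apply K_window_mass; lra. }
  assert (Hnear : 0 <= RInt G (-1) 0 + RInt G 0 1).
  { destruct (RInt_reflect G 0 (-1) 0 (Hsub (-1) 0 ltac:(lra) ltac:(lra) ltac:(lra)))
      as [Hex Hrefl].
    replace (0 - 0) with 0 in Hex, Hrefl by ring.
    replace (0 - -1) with 1 in Hex, Hrefl by ring.
    rewrite Hrefl, <- RInt_plusR by (auto; apply Hsub; lra).
    apply RInt_ge_0; [lra | apply ex_RInt_plusR; auto; apply Hsub; lra |].
    intros y Hy. unfold G, conv_integrand.
    assert (u0 : u 0 = 0) by (pose proof (u_odd 0 ltac:(lra)) as H0;
                              rewrite Ropp_0 in H0; lra).
    assert (0 <= u y) by (rewrite <- u0; apply u_mono; lra).
    assert (K (x + y) <= K (x - y)) by (apply K_nonincr; lra).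
    replace (x - (0 - y)) with (x + y) by ring. replace (0 - y) with (- y) by ring.
    rewrite u_odd by lra. nra. }
  lra.
Qed.

End Convolution.

Lemma sat_mono a b : a <= b -> sat a <= sat b.
Proof. unfold sat, Rmax, Rmin. intros; repeat destruct Rle_dec; lra. Qed.

Lemma sat_odd a : sat (- a) = - sat a.
Proof. unfold sat, Rmax, Rmin. repeat destruct Rle_dec; lra. Qed.

Lemma sat_ge_1 a : 1 <= a -> sat a = 1.
Proof. unfold sat, Rmax, Rmin. intros; repeat destruct Rle_dec; lra. Qed.

Lemma sat_le_m1 a : a <= -1 -> sat a = -1.
Proof. unfold sat, Rmax, Rmin. intros; repeat destruct Rle_dec; lra. Qed.

Lemma sat_bounded a : -1 <= sat a <= 1.
Proof. unfold sat, Rmax, Rmin. repeat destruct Rle_dec; lra. Qed.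

(* Saturating an odd function that is >= 1 on (1,r] and nondecreasing on
   [-1,1] gives an element of B_1: outside [-1,1] the saturation is +-1. *)
Lemma sat_inB1 r (T : R -> R) :
  (forall x, -r <= x <= r -> T (- x) = - T x) ->
  (forall x, 1 < x <= r -> 1 <= T x) ->
  (forall x z, -1 <= x -> x <= z -> z <= 1 -> T x <= T z) ->
  inB1 r (fun x => sat (T x)).
Proof.
  intros T_odd T_ge_1 T_mono.
  assert (T_le_m1 : forall x, -r <= x < -1 -> T x <= -1).
  { intros x Hx. replace x with (- - x) by ring. rewrite T_odd by lra.
    assert (1 <= T (- x)) by (apply T_ge_1; lra). lra. }
  repeat split.
  - intros x Hx. apply sat_ge_1, T_ge_1; auto.
  - intros x Hx. apply sat_le_m1, T_le_m1; auto.
  - intros x Hx. rewrite T_odd by auto. apply sat_odd.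
  - intros x y Hx Hxy Hy.
    destruct (Rlt_dec 1 y); [rewrite (sat_ge_1 (T y)) by auto; apply sat_bounded|].
    destruct (Rlt_dec x (-1)); [rewrite (sat_le_m1 (T x)) by auto; apply sat_bounded|].
    apply sat_mono, T_mono; lra.
Qed.

Lemma RInt_eq_RInt g a b v : RInt_eq g a b v -> ex_RInt g a b /\ RInt g a b = v.
Proof.
  intros [pr Hpr]. split; [exact (ex_RInt_Reals_1 _ _ _ pr)|].
  rewrite (RInt_Reals _ _ _ pr). exact Hpr.
Qed.

Lemma RInt_eq_of_ex_RInt g a b : ex_RInt g a b -> RInt_eq g a b (RInt g a b).
Proof.
  intro H. exists (ex_RInt_Reals_0 _ _ _ H). symmetry. apply RInt_Reals.
Qed.

Lemma support_vanishes (K : R -> R) :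
  (forall x, adherence (fun y => K y <> 0) x <-> -2 <= x <= 2) ->
  forall t, 2 < Rabs t -> K t = 0.
Proof.
  intros Hadh t Ht. destruct (Req_dec (K t) 0) as [|Hnz]; auto.
  assert (Hin : -2 <= t <= 2) by (apply Hadh, adherence_P1; exact Hnz).
  unfold Rabs in Ht. destruct Rcase_abs in Ht; lra.
Qed.

Theorem mainTheorem10 (r : R) (K : R -> R) :
  r > 4 -> kernel_hyp K ->
  forall u : R -> R, inB1 r u ->
    exists Tu : R -> R, IsT K r u Tu /\ inB1 r (fun x => sat (Tu x)).
Proof.
  intros Hr (K_nonneg & [M K_le_M] & K_even & K_nonincr & K_adh & [v [Hv Hv_ge_2]]) u Hu.
  destruct (RInt_eq_RInt K (-2) 2 v Hv) as [K_int K_int_v].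
  assert (K_mass : 2 <= RInt K (-2) 2) by lra.
  assert (K_support := support_vanishes K K_adh).
  exists (conv K r u). split.
  - intros x Hx. apply RInt_eq_of_ex_RInt. eapply conv_integrand_integrable; eauto.
  - apply sat_inB1.
    + intros x Hx. eapply conv_odd; eauto.
    + intros x Hx. eapply conv_ge_1; eauto.
    + intros x z Hx Hxz Hz. eapply conv_nondecreasing; eauto; lra.
Qed.
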